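(* Let $(X,d,A)$ be a metric pair. A set $S\subset(\overline{D}_\infty(X,A),W_\infty)$ is totally bounded if and only if $S$ is uniformly upper finite and upper totally bounded. For $p\in[1,\infty)$, a set $S\subset(\overline{D}_p(X,A),W_p)$ is totally bounded if and only if $S$ is uniformly upper finite, upper totally bounded, and uniformly $p$-vanishing.
   Context: A metric on $X$ is a map $d:X\times X\to[0,\infty]$ with $d(x,x)=0$, symmetry and the triangle inequality (infinite distances allowed, $d(x,y)=0$ need not imply $x=y$); a metric pair $(X,d,A)$ is such a space with a closed subset $A$. Write $d(x,A)=\inf_{a\in A}d(x,a)$, $A^\delta=\{x:d(x,A)<\delta\}$ for $\delta\in(0,\infty]$. $\overline{D}(X,A)$ is the set of countable formal sums $\hat\alpha=\sum_{i\in I}x_i$ of points of $X\setminus A$ (repetitions allowed); $0$ the empty sum; $|\alpha|=|I|$; the support of $\alpha$ is the set of points appearing in $\hat\alpha$. A matching of $\hat\alpha=\sum_{i\in I}x_i$, $\hat\beta=\sum_{j\in J}y_j$ is a formal sum $\sum_{k\in K}(x_k,y_{\varphi(k)})+\sum_{i\in I\setminus K}(x_i,z_i)+\sum_{j\in J\setminus\varphi(K)}(w_j,y_j)$ with $K\subset I$, $\varphi$ injective, $z_i,w_j\in A$; its $p$-cost is the $\ell^p$ norm (sup norm if $p=\infty$) of the distances of paired points; $W_p$ is the infimum of $p$-costs. $u_\delta(\alpha)$, $\ell_\delta(\alpha)$ are the restrictions of $\hat\alpha$ to $X\setminus A^\delta$ and to $A^\delta\setminus A$. For $p<\infty$, $\overline{D}_p(X,A)=\{\alpha: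 |u_\infty(\alpha)|<\infty,\ W_p(\ell_\infty(\alpha),0)<\infty\}$; $\overline{D}_\infty(X,A)=\{\alpha:|u_\delta(\alpha)|<\infty\ \forall\delta>0\}$. A subset $T$ of a metric space is totally bounded if for each $\varepsilon>0$ there is a finite set $\{t_1,\dots,t_n\}\subset T$ with $T\subset\bigcup_i B_\varepsilon(t_i)$. For $S\subset\overline{D}(X,A)$: $S$ is uniformly upper finite if for every $\varepsilon>0$ there is $M_\varepsilon\ge0$ with $|u_\varepsilon(\alpha)|\le M_\varepsilon$ for all $\alpha\in S$; $S$ is upper totally bounded if for every $\varepsilon>0$ the set $u_\varepsilon(S)=\bigcup_{\alpha\in S}\mathrm{supp}(u_\varepsilon(\alpha))\subset X$ is totally bounded in $(X,d)$; $S$ is uniformly $p$-vanishing if for every $\varepsilon>0$ there is $\delta>0$ with $W_p(\ell_\delta(\alpha),0)<\varepsilon$ for all $\alpha\in S$. *)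

From mathcomp Require Import all_boot all_order all_algebra.
From mathcomp Require Import all_classical all_reals all_analysis.
Set Implicit Arguments. Unset Strict Implicit. Unset Printing Implicit Defensive.
Import Order.TTheory GRing.Theory Num.Theory.
Local Open Scope classical_set_scope.
Local Open Scope ring_scope.

Section PersistenceDiagrams.
Variables (R : realType) (X : Type) (d : X -> X -> \bar R) (A : set X).

Definition is_metric : Prop :=
  [/\ forall x, d x x = 0%E,
      forall x y, (0 <= d x y)%E,
      forall x y, d x y = d y x &
      forall x y z, (d x z <= d x y + d y z)%E].

(* d(x, A) = inf_{a in A} d(x, a)  (= +oo when A is empty) *)
Definition distA (x : X) : \bar R := ereal_inf [set d x a | a in A].

(* A is closed in the (extended pseudo)metric topology: contains every point
   at distance 0 from it (i.e. every point whose balls all meet A). *)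
Definition closed_in_metric : Prop := forall x, distA x = 0%E -> A x.

(* A countable formal sum of points of X \ A: a countable index set
   (a subset of nat) together with the points indexed by it. *)
Record diagram := Diagram {
  dI : set nat;
  dx : nat -> X;
  dxA : forall i, dI i -> ~ A (dx i) }.

Program Definition restrict (P : X -> Prop) (a : diagram) : diagram :=
  @Diagram [set i | dI a i /\ P (dx a i)] (dx a) _.
Next Obligation. by move=> P a i [/dxA]. Qed.

(* u_delta(alpha): restriction to X \ A^delta = {x | d(x,A) >= delta},
   delta in (0, +oo]. *)
Definition u_ (delta : \bar R) (a : diagram) : diagram :=
  restrict (fun x => (delta <= distA x)%E) a.
(* l_delta(alpha): restriction to A^delta \ A = {x | d(x,A) < delta} \ A. *)
Definition l_ (delta : \bar R) (a : diagram) : diagram :=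
  restrict (fun x => (distA x < delta)%E) a.

(* Matchings between a = sum_{i in I} x_i and b = sum_{j in J} y_j:
   K subset of I, phi injective on K with phi(K) in J, points z_i in A for
   i in I \ K and w_j in A for j in J \ phi(K). *)
Definition is_matching (a b : diagram) (K : set nat) (phi : nat -> nat)
    (z w : nat -> X) : Prop :=
  [/\ K `<=` dI a,
      (forall i j, K i -> K j -> phi i = phi j -> i = j),
      phi @` K `<=` dI b,
      (forall i, dI a i -> ~ K i -> A (z i)) &
      (forall j, dI b j -> ~ (phi @` K) j -> A (w j))].

Definition pcost (p : R) (a b : diagram) (K : set nat) (phi : nat -> nat)
    (z w : nat -> X) : \bar R :=
  poweR ((\esum_(k in K) poweR (d (dx a k) (dx b (phi k))) p)
       + (\esum_(i in dI a `\` K) poweR (d (dx a i) (z i)) p)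
       + (\esum_(j in dI b `\` (phi @` K)) poweR (d (w j) (dx b j)) p))%E p^-1.

Definition infcost (a b : diagram) (K : set nat) (phi : nat -> nat)
    (z w : nat -> X) : \bar R :=
  ereal_sup ([set 0%E]
    `|` [set d (dx a k) (dx b (phi k)) | k in K]
    `|` [set d (dx a i) (z i) | i in dI a `\` K]
    `|` [set d (w j) (dx b j) | j in dI b `\` (phi @` K)]).

Definition Wp (p : R) (a b : diagram) : \bar R :=
  ereal_inf [set c | exists K phi z w,
     is_matching a b K phi z w /\ c = pcost p a b K phi z w].

Definition Winf (a b : diagram) : \bar R :=
  ereal_inf [set c | exists K phi z w,
     is_matching a b K phi z w /\ c = infcost a b K phi z w].

(* The empty formal sum 0 (the dummy point map is irrelevant). *)
Program Definition zero_of (a : diagram) : diagram :=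
  @Diagram set0 (dx a) _.
Next Obligation. by []. Qed.

Definition finite_diag (a : diagram) : Prop := finite_set (dI a).

Definition Dp (p : R) : set diagram :=
  [set a | finite_diag (u_ +oo%E a) /\ (Wp p (l_ +oo%E a) (zero_of a) < +oo)%E].

Definition Dinf : set diagram :=
  [set a | forall delta : R, 0 < delta -> finite_diag (u_ delta%:E a)].

Definition totally_bounded_wrt {T : Type} (dist : T -> T -> \bar R)
    (S : set T) : Prop :=
  forall eps : R, 0 < eps -> exists F : set T,
    [/\ finite_set F, F `<=` S &
        S `<=` \bigcup_(t in F) [set s | (dist t s < eps%:E)%E]].

Definition unif_upper_finite (S : set diagram) : Prop :=
  forall eps : R, 0 < eps -> exists M : nat,
    forall a, S a -> (dI (u_ eps%:E a) #<= `I_M)%card.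

Definition upper_totally_bounded (S : set diagram) : Prop :=
  forall eps : R, 0 < eps ->
    totally_bounded_wrt d
      [set x | exists2 a, S a & exists2 i, dI (u_ eps%:E a) i & x = dx a i].

Definition unif_p_vanishing (p : R) (S : set diagram) : Prop :=
  forall eps : R, 0 < eps -> exists2 delta : R, 0 < delta &
    forall a, S a -> (Wp p (l_ delta%:E a) (zero_of a) < eps%:E)%E.

End PersistenceDiagrams.

(* A diagram splits at height [eps] into its upper part [u_eps] (finitely
   many points at distance at least [eps] from [A]) and its lower part
   [l_eps]. A matching of cost less than [rho <= eps / 2] pairs every upper
   point of one diagram with an upper point at height [rho] of the other, at
   distance less than [rho]; so a finite net for [W] bounds [|u_eps|]
   uniformly and yields a finite net of the upper points. Conversely, if all
   upper parts have at most [M] points, lying in a set covered by finitely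
   many [eta]-balls, the sequence of ball centres of the upper points of a
   diagram takes finitely many values, and two diagrams with the same
   sequence match their upper parts at distance [2 eta]; the lower parts are
   sent to [A], at cost less than [delta] for [W_inf], and small by uniform
   [p]-vanishing for [W_p]. Finally a totally bounded set is uniformly
   [p]-vanishing: a finite net is, and the lower part of a diagram close to a
   net point is sent to [A] either along the matching or through the lower
   part of its partner, at the price of a factor [2^p]. *)

From mathcomp Require Import all_boot all_order all_algebra.
From mathcomp Require Import all_classical all_reals all_analysis.
From mathcomp Require Import finmap ring lra.
Set Implicit Arguments. Unset Strict Implicit. Unset Printing Implicit Defensive.
Import Order.TTheory GRing.Theory Num.Theory.
Local Open Scope classical_set_scope.
Local Open Scope ring_scope.

Section ExtendedMetric.
Variables (R : realType) (X : Type) (d : X -> X -> \bar R) (A : set X).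
Hypothesis hd : is_metric d.
Local Open Scope ereal_scope.

Lemma d_ge0 x y : 0 <= d x y. Proof. by case: hd. Qed.
Lemma dC x y : d x y = d y x. Proof. by case: hd. Qed.
Lemma d_triangle x y z : d x z <= d x y + d y z. Proof. by case: hd. Qed.

Lemma d_triangle_lt x y z (r s : R) :
  d x y < r%:E -> d y z < s%:E -> d x z < (r + s)%:E.
Proof. by move=> xy yz; apply: le_lt_trans (d_triangle x y z) _; rewrite EFinD lteD. Qed.

Lemma distA_ge0 x : 0 <= distA d A x.
Proof. by apply: le_ereal_inf_tmp => _ [a _ <-]; exact: d_ge0. Qed.

Lemma distA_le x a : A a -> distA d A x <= d x a.
Proof. by move=> Aa; apply: ereal_inf_lbound; exists a. Qed.

Lemma distA_ltP x (r : \bar R) : distA d A x < r -> exists2 a, A a & d x a < r.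
Proof. by move=> /ereal_inf_lt[_ [a Aa <-] h]; exists a. Qed.

Lemma distA_le_add x y : distA d A x <= d x y + distA d A y.
Proof.
case Hxy: (d x y) => [r| |].
- rewrite addeC -leeBlDr //; apply: le_ereal_inf_tmp => _ [a Aa <-].
  rewrite leeBlDr // addeC -Hxy; apply: le_trans (d_triangle x y a).
  exact: distA_le.
- by rewrite addye ?leey // gt_eqF // (lt_le_trans _ (distA_ge0 y)) ?ltNye.
- by have := d_ge0 x y; rewrite Hxy.
Qed.

Lemma A_point_closer_than_high x y (delta : R) : distA d A x < delta%:E ->
  (delta *+ 2)%:E <= distA d A y -> exists2 c, A c & d x c < d y x.
Proof.
move=> x_low y_high; apply: distA_ltP; rewrite ltNge; apply/negP => yx.
move: y_high; apply/negP; rewrite -ltNge.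
apply: le_lt_trans (distA_le_add y x) _.
apply: (@le_lt_trans _ _ (distA d A x + distA d A x)); first by rewrite leeD2r.
by rewrite mulr2n EFinD lteD.
Qed.

Lemma internal_net (T P : set X) (rho r : R) : finite_set P -> (rho *+ 2 <= r)%R ->
    (forall x, T x -> exists2 c, P c & d c x < rho%:E) ->
  exists F, [/\ finite_set F, F `<=` T &
    T `<=` \bigcup_(t in F) [set x | d t x < r%:E]].
Proof.
move=> finP rho_r cover.
have /choice[pick pickP] : forall c, exists y,
    (exists2 x, T x & d c x < rho%:E) -> T y /\ d c y < rho%:E.
  move=> c; have [[x Tx cx]|nc] := pselect (exists2 x, T x & d c x < rho%:E).
    by exists x.
  by exists c.
exists (pick @` (P `&` [set c | exists2 x, T x & d c x < rho%:E])); split.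
- by apply: finite_image; apply: sub_finite_set finP; exact: subIsetl.
- by move=> _ [c [_ /pickP[Tc _]] <-].
- move=> x Tx; have [c Pc cx] := cover x Tx.
  have near_c : exists2 y, T y & d c y < rho%:E by exists x.
  exists (pick c); first by exists c.
  apply: (@lt_le_trans _ _ (rho + rho)%:E); last by rewrite lee_fin -mulr2n.
  by apply: (d_triangle_lt _ cx); rewrite dC; case: (pickP c near_c).
Qed.

End ExtendedMetric.

Section ExtendedPowers.
Variable R : realType.
Local Open Scope ereal_scope.
Implicit Types (x y : \bar R) (p : R).

Lemma ge0_lee_poweR p x y : (0 <= p)%R -> 0 <= x -> x <= y -> x `^ p <= y `^ p.
Proof.
move=> p0 x0 xy; apply: gt0_ler_poweR => //; rewrite in_itv /= ?x0 ?leey //.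
by rewrite (le_trans x0 xy).
Qed.

Lemma gt0_lte_poweR p x y : (0 < p)%R -> 0 <= x -> x < y -> x `^ p < y `^ p.
Proof.
move=> p0; case: x => [x| |]; case: y => [y| |] //= x0 xy.
- rewrite lte_fin gt0_ltr_powR // nnegrE -?lee_fin //.
  by rewrite ltW // (le_lt_trans x0 xy).
- by rewrite gt_eqF // ltry.
Qed.

Lemma gt0_lte_poweR2 p x y : (0 < p)%R -> 0 <= x -> 0 <= y ->
  (x `^ p < y `^ p) = (x < y).
Proof.
move=> p0 x0 y0; apply/idP/idP; last exact: gt0_lte_poweR p0 x0.
by apply: contraTT; rewrite -!leNgt; exact: ge0_lee_poweR (ltW p0) y0.
Qed.

Lemma poweRVK p x : (0 < p)%R -> 0 <= x -> (x `^ p^-1) `^ p = x.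
Proof. by move=> p0 x0; rewrite -poweRrM mulVf ?gt_eqF // poweRe1. Qed.

Lemma powRVK p (r : R) : (0 < p)%R -> (0 <= r)%R -> ((r `^ p^-1) `^ p = r)%R.
Proof. by move=> p0 r0; rewrite -powRrM mulVf ?gt_eqF // powRr1. Qed.

Lemma poweRV_lt p (r : R) x : (0 < p)%R -> (0 < r)%R -> 0 <= x ->
  (x `^ p^-1 < r%:E) = (x < (r `^ p)%:E).
Proof.
move=> p0 r0 x0.
by rewrite -(gt0_lte_poweR2 p0) ?poweR_ge0 ?lee_fin ?(ltW r0) // poweRVK // poweR_EFin.
Qed.

Lemma powR2_ge1 p : (0 <= p)%R -> (1 <= 2 `^ p)%R.
Proof.
move=> p0; apply: (@le_trans _ _ (1 `^ p)%R); first by rewrite powR1.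
by rewrite ge0_ler_powR ?ler1n ?nnegrE.
Qed.

Lemma poweRD_le p x y : (0 < p)%R -> 0 <= x -> 0 <= y ->
  (x + y) `^ p <= (2 `^ p)%:E * (x `^ p + y `^ p).
Proof.
move=> p0 x0 y0.
have -> : (2 `^ p)%:E * (x `^ p + y `^ p) = (2%:E * x) `^ p + (2%:E * y) `^ p.
  by rewrite !poweRM ?lee_fin // poweR_EFin ge0_muleDr // poweR_ge0.
wlog xy : x y x0 y0 / x <= y.
  move=> wlog; have [|/ltW yx] := leP x y; first exact: wlog.
  by rewrite addeC [X in _ <= X]addeC; exact: wlog.
apply: le_trans (leeDr _ (poweR_ge0 _ _)).
apply: ge0_lee_poweR; [exact: ltW | exact: adde_ge0 |].
by rewrite (mule_natl _ 2) mule2n leeD2r.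
Qed.

End ExtendedPowers.

Section NonnegativeSums.
Variables (R : realType) (T : choiceType).
Local Open Scope ereal_scope.
Implicit Types (P B C : set T) (f : T -> \bar R).

Lemma esum_le_term P f k :
  P k -> (forall i, P i -> 0 <= f i) -> f k <= \esum_(i in P) f i.
Proof.
move=> Pk f0; apply: esum_ge; exists [set k]; last by rewrite fsbig_set1.
by split; [exact: finite_set1 | move=> i ->].
Qed.

Lemma le_esum_subset B C f : B `<=` C ->
  (forall i, C i -> 0 <= f i) -> \esum_(i in B) f i <= \esum_(i in C) f i.
Proof.
move=> BC f0; rewrite (esum_mkcond B) (esum_mkcond C); apply: le_esum => i _.
case: ifPn => iB; last by case: ifPn => // iC; apply: f0; exact: set_mem.
by rewrite ifT ?lexx //; apply: mem_set; apply: BC; exact: set_mem.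
Qed.

Lemma esum_tail P f (eta : R) : (forall i, P i -> 0 <= f i) ->
    \esum_(i in P) f i < +oo -> (0 < eta)%R ->
  exists J, [/\ finite_set J, J `<=` P & \esum_(i in P `\` J) f i < eta%:E].
Proof.
move=> f0 sfin e0.
have sf : \esum_(i in P) f i \is a fin_num by rewrite ge0_fin_numE // esum_ge0.
have [_ [J [finJ JP] <-] hJ] := ub_ereal_sup_adherent e0 sf.
exists J; split => //.
have e := esumID J P f f0.
rewrite -/(esum P f) in hJ.
rewrite (setIidr JP) [X in _ = X + _]esum_fset // in e; last first.
  by move=> i /set_mem iJ; exact: f0 (JP _ iJ).
have Jfin : \sum_(i \in J) f i \is a fin_num.
  rewrite ge0_fin_numE ?fsume_ge0 // ?(le_lt_trans _ sfin) //.
    by rewrite e leeDl // esum_ge0 // => i [/f0].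
  by move=> i iJ; exact: f0 (JP _ iJ).
by move: hJ; rewrite setDE lteBlDr // e lteD2lE.
Qed.

Lemma esumZl_le P f (r : R) : (0 <= r)%R -> (forall i, 0 <= f i) ->
  \esum_(i in P) r%:E * f i <= r%:E * \esum_(i in P) f i.
Proof.
move=> r0 f0; apply: ge_ereal_sup => _ [J [finJ JP] <-].
rewrite fsbig_finite //= -ge0_sume_distrr; last by move=> *; exact: f0.
apply: lee_wpmul2l; first by rewrite lee_fin.
by rewrite -fsbig_finite //; apply: ereal_sup_ubound; exists J.
Qed.

Lemma esum_le_card P f (n : nat) (c : R) : (P #<= `I_n)%card -> (0 <= c)%R ->
    (forall i, P i -> 0 <= f i <= c%:E) ->
  \esum_(i in P) f i <= (n%:R * c)%:E.
Proof.
move=> Pn c0 f0c; have finP : finite_set P by apply/finite_set_leP; exists n.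
rewrite esum_fset //; last by move=> i /set_mem /f0c /andP[].
rewrite fsbig_finite //=.
suff : forall (s : seq T) n, (forall i, i \in s -> P i) -> (size s <= n)%N ->
    \sum_(i <- s) f i <= (n%:R * c)%:E.
  by apply; [move=> i; rewrite in_fset_set // in_setE | exact: geq_card_fset_set].
move=> {Pn}; elim=> [|a s IH] {}n Ps sz.
  by rewrite big_nil lee_fin mulr_ge0.
case: n sz => // n sz; rewrite big_cons -addn1 natrD mulrDl mul1r EFinD addeC.
apply: leeD; first by have /andP[] := f0c a (Ps a (mem_head _ _)).
by apply: IH => // i si; apply: Ps; rewrite inE si orbT.
Qed.

End NonnegativeSums.

Lemma finite_set_nat_ub (D : set nat) :
  finite_set D -> exists M, forall n, D n -> (n <= M)%N.
Proof.
move=> fD; exists (\max_(n <- fset_set D) n) => n Dn.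
by apply: (@leq_bigmax_seq _ _ _ (fun i => i)); rewrite // in_fset_set // in_setE.
Qed.

Lemma finite_set_pos_lb (R : realType) (D : set R) : finite_set D ->
  (forall x, D x -> 0 < x) -> exists2 m, 0 < m & forall x, D x -> m <= x.
Proof.
move=> fD D_gt0.
suff : forall s : seq R, (forall x, x \in s -> 0 < x) ->
    exists2 m, 0 < m & forall x, x \in s -> m <= x.
  case/(_ (fset_set D)) => [x|m m0 hm]; first by rewrite in_fset_set // in_setE => /D_gt0.
  by exists m => // x Dx; apply: hm; rewrite in_fset_set // in_setE.
elim=> [|a s IH] s_gt0; first by exists 1.
have [|m m0 hm] := IH; first by move=> x xs; apply: s_gt0; rewrite inE xs orbT.
exists (Num.min a m); first by rewrite lt_min m0 s_gt0 ?mem_head.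
move=> x; rewrite inE => /orP[/eqP ->|xs]; first by rewrite ge_min lexx.
by rewrite ge_min hm ?orbT.
Qed.

Definition bounded_seqs (T : Type) (G : set T) (n : nat) : set (seq T) :=
  [set s | (size s <= n)%N && all (fun x => `[< G x >]) s].

Lemma finite_bounded_seqs (T : Type) (G : set T) (n : nat) :
  finite_set G -> finite_set (bounded_seqs G n).
Proof.
move=> fG; elim: n => [|n IH].
  apply: (sub_finite_set _ (finite_set1 [::])) => s /= /andP[].
  by rewrite leqn0 => /nilP.
apply: (@sub_finite_set _ _
  ([set [::]] `|` [set x.1 :: x.2 | x in G `*` bounded_seqs G n])).
  case=> [|x s] /=; first by left.
  by case/andP=> sz /andP[/asboolP Gx Gs]; right; exists (x, s); split=> //; apply/andP.
rewrite finite_setU; split; first exact: finite_set1.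
by apply: finite_image; exact: finite_setX.
Qed.

Lemma finite_image_representatives (T U : Type) (S : set T) (f : T -> U) :
  finite_set (f @` S) ->
  exists F, [/\ finite_set F, F `<=` S & forall b, S b -> exists2 a, F a & f a = f b].
Proof.
move=> fin; have [->|/set0P[a0 Sa0]] := eqVneq S set0.
  by exists set0; split => //; exact: finite_set0.
have /choice[rep repP] : forall u, exists a, (f @` S) u -> S a /\ f a = u.
  by move=> u; have [[a Sa <-]|] := pselect ((f @` S) u); [exists a | exists a0].
exists (rep @` (f @` S)); split; first exact: finite_image.
  by move=> _ [u Su <-]; case: (repP u Su).
move=> b Sb; have Sfb : (f @` S) (f b) by exists b.
by exists (rep (f b)); [exists (f b) | case: (repP _ Sfb)].
Qed.

Lemma map_nth_index (T : eqType) (U : Type) (x0 : T) (f g : T -> U) (sa sb : seq T) :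
  uniq sa -> uniq sb -> map f sa = map g sb ->
  let phi i := nth x0 sb (index i sa) in
  [/\ map phi sa = sb, {in sa &, injective phi} & {in sa, forall i, f i = g (phi i)}].
Proof.
move=> ua ub fg phi.
have size_ab : size sa = size sb by rewrite -(size_map f) fg size_map.
have idx : {in sa, forall i, index (phi i) sb = index i sa}.
  by move=> i ia; rewrite /phi index_uniq // -size_ab index_mem.
split.
- apply: (@eq_from_nth _ x0); first by rewrite size_map.
  by move=> m; rewrite size_map => ma; rewrite (nth_map x0) // /phi index_uniq.
- move=> i j ia ja e.
  by rewrite -(nth_index x0 ia) -(nth_index x0 ja) -!idx // e.
- move=> i ia; have := congr1 (fun s => nth (f x0) s (index i sa)) fg.
  by rewrite /= !(nth_map x0) ?index_mem ?nth_index // -size_ab index_mem.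
Qed.

Section Matchings.
Variables (R : realType) (X : Type) (d : X -> X -> \bar R) (A : set X).
Hypothesis hd : is_metric d.
Local Open Scope ereal_scope.
Implicit Types (a b : diagram A) (K : set nat) (phi : nat -> nat) (z w : nat -> X).

Definition close_matching a b K phi z w (rho : \bar R) :=
  is_matching a b K phi z w /\
  [/\ forall k, K k -> d (dx a k) (dx b (phi k)) < rho,
      forall i, dI a i -> ~ K i -> d (dx a i) (z i) < rho &
      forall j, dI b j -> ~ (phi @` K) j -> d (w j) (dx b j) < rho].

Lemma Winf_close a b rho : Winf d a b < rho ->
  exists K phi z w, close_matching a b K phi z w rho.
Proof.
move=> /ereal_inf_lt[_ [K [phi [z [w [hm ->]]]]] hlt].
exists K, phi, z, w; split => //; split.
- move=> k Kk; apply: le_lt_trans hlt; apply: ereal_sup_ubound.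
  by left; left; right; exists k.
- move=> i ai nK; apply: le_lt_trans hlt; apply: ereal_sup_ubound.
  by left; right; exists i.
- move=> j bj nj; apply: le_lt_trans hlt; apply: ereal_sup_ubound.
  by right; exists j.
Qed.

Definition psum_paired (p : R) a b K phi :=
  \esum_(k in K) d (dx a k) (dx b (phi k)) `^ p.
Definition psum_unpaired_l (p : R) a K z :=
  \esum_(i in dI a `\` K) d (dx a i) (z i) `^ p.
Definition psum_unpaired_r (p : R) b K phi w :=
  \esum_(j in dI b `\` phi @` K) d (w j) (dx b j) `^ p.

Lemma pcostE p a b K phi z w : pcost d p a b K phi z w =
  (psum_paired p a b K phi + psum_unpaired_l p a K z
   + psum_unpaired_r p b K phi w) `^ p^-1.
Proof. by []. Qed.

Lemma psum_paired_ge0 p a b K phi : 0 <= psum_paired p a b K phi.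
Proof. by apply: esum_ge0 => *; exact: poweR_ge0. Qed.
Lemma psum_unpaired_l_ge0 p a K z : 0 <= psum_unpaired_l p a K z.
Proof. by apply: esum_ge0 => *; exact: poweR_ge0. Qed.
Lemma psum_unpaired_r_ge0 p b K phi w : 0 <= psum_unpaired_r p b K phi w.
Proof. by apply: esum_ge0 => *; exact: poweR_ge0. Qed.

Lemma Wp_close (p rho : R) a b : (0 < p)%R -> (0 < rho)%R ->
    Wp d p a b < rho%:E ->
  exists K phi z w, close_matching a b K phi z w rho%:E /\
    psum_paired p a b K phi + psum_unpaired_l p a K z
    + psum_unpaired_r p b K phi w < (rho `^ p)%:E.
Proof.
move=> p0 r0 /ereal_inf_lt[_ [K [phi [z [w [hm ->]]]]]].
have s1 := psum_paired_ge0 p a b K phi; have s2 := psum_unpaired_l_ge0 p a K z.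
have s3 := psum_unpaired_r_ge0 p b K phi w.
rewrite pcostE poweRV_lt ?adde_ge0 // => htot.
exists K, phi, z, w; split => //; split => //.
have term_lt e : 0 <= e -> e `^ p <= psum_paired p a b K phi
    + psum_unpaired_l p a K z + psum_unpaired_r p b K phi w -> e < rho%:E.
  move=> e0 he; rewrite -(gt0_lte_poweR2 p0) ?lee_fin ?(ltW r0) // poweR_EFin.
  exact: le_lt_trans he htot.
split.
- move=> k Kk; apply: term_lt; first exact: d_ge0.
  apply: le_trans (leeDl _ s3); apply: le_trans (leeDl _ s2).
  by apply: (esum_le_term (f := fun k => d _ _ `^ p)) => // *; exact: poweR_ge0.
- move=> i ai nK; apply: term_lt; first exact: d_ge0.
  apply: le_trans (leeDl _ s3); apply: le_trans (leeDr _ s1).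
  by apply: (esum_le_term (f := fun i => d _ _ `^ p)) => // *; exact: poweR_ge0.
- move=> j bj nj; apply: term_lt; first exact: d_ge0.
  apply: le_trans (leeDr _ (adde_ge0 s1 s2)).
  by apply: (esum_le_term (f := fun j => d _ _ `^ p)) => // *; exact: poweR_ge0.
Qed.

Lemma Wp_zero_lt (p : R) a b rho : (0 < p)%R -> Wp d p a (zero_of b) < rho ->
  exists z, (forall i, dI a i -> A (z i)) /\
    (\esum_(i in dI a) d (dx a i) (z i) `^ p) `^ p^-1 < rho.
Proof.
move=> p0 /ereal_inf_lt[_ [K [phi [z [w [[hK _ himg hz _] ->]]]]]].
have K0 : K = set0.
  by apply/seteqP; split => // k Kk; have := himg (phi k) (ex_intro2 _ _ k Kk erefl).
subst K => h; exists z; split; first by move=> i ai; exact: hz.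
move: h; rewrite pcostE /psum_paired /psum_unpaired_l /psum_unpaired_r.
by rewrite image_set0 setD0 set0D !esum_set0 add0e adde0.
Qed.

Lemma Wp_zero_le (p : R) a b z : (forall i, dI a i -> A (z i)) ->
  Wp d p a (zero_of b) <= (\esum_(i in dI a) d (dx a i) (z i) `^ p) `^ p^-1.
Proof.
move=> hz; apply: ereal_inf_lbound; exists set0, id, z, z; split.
  split; [by [] | by move=> i j [] | by move=> _ [i []] | | by move=> j []].
  by move=> i ai _; exact: hz.
rewrite pcostE /psum_paired /psum_unpaired_l /psum_unpaired_r.
by rewrite image_set0 setD0 set0D !esum_set0 add0e adde0.
Qed.

Lemma dI_l_u (delta : \bar R) a : dI a `\` dI (u_ d delta a) = dI (l_ d delta a).
Proof.
apply/seteqP; split => i /=.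
- by move=> [ai nu]; split => //; rewrite ltNge; apply/negP => h; apply: nu.
- by move=> [ai lt]; split => // -[_ h]; move: lt; rewrite ltNge h.
Qed.

Lemma upper_is_matching (delta : \bar R) (a b : diagram A) phi (za zb : nat -> X) :
    (forall i j, dI (u_ d delta a) i -> dI (u_ d delta a) j -> phi i = phi j -> i = j) ->
    phi @` dI (u_ d delta a) = dI (u_ d delta b) ->
    (forall i, dI (l_ d delta a) i -> A (za i)) ->
    (forall j, dI (l_ d delta b) j -> A (zb j)) ->
  is_matching a b (dI (u_ d delta a)) phi za zb.
Proof.
move=> inj img za_A zb_A; split => //; first by move=> i [].
- by rewrite img => j [].
- by move=> i ai nu; apply: za_A; rewrite -dI_l_u.
- by move=> j bj; rewrite img => nu; apply: zb_A; rewrite -dI_l_u.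
Qed.

Lemma lower_to_A (delta : R) (a : diagram A) : exists z, forall i,
  dI (l_ d delta%:E a) i -> A (z i) /\ d (dx a i) (z i) < delta%:E.
Proof.
have /choice[z zP] : forall i, exists c,
    dI (l_ d delta%:E a) i -> A c /\ d (dx a i) c < delta%:E.
  move=> i; have [[_ low]|nl] := pselect (dI (l_ d delta%:E a) i).
    by have [c Ac ac] := distA_ltP low; exists c.
  by exists (dx a i).
by exists z.
Qed.

End Matchings.

Section DpDiagrams.
Variables (R : realType) (X : Type) (d : X -> X -> \bar R) (A : set X).
Hypotheses (hd : is_metric d) (hA : closed_in_metric d A).
Local Open Scope ereal_scope.
Implicit Types (t : diagram A) (p : R).

Lemma distA_dx_gt0 t i : dI t i -> 0 < distA d A (dx t i).
Proof.
move=> ti; rewrite lt_neqAle distA_ge0 // andbT.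
by apply/eqP => /esym /hA; exact: dxA.
Qed.

Lemma dI_l_subset (delta delta' : \bar R) t :
  delta <= delta' -> dI (l_ d delta t) `<=` dI (l_ d delta' t).
Proof. by move=> le i [ti lt]; split => //; exact: lt_le_trans le. Qed.

Lemma Dp_lower_summable p t : (0 < p)%R -> Dp d p t ->
  exists z, (forall i, dI (l_ d +oo t) i -> A (z i)) /\
    \esum_(i in dI (l_ d +oo t)) d (dx t i) (z i) `^ p < +oo.
Proof.
move=> p0 [_ /(Wp_zero_lt p0)[z [hz hlt]]]; exists z; split => //.
by apply: lty_poweRy hlt; rewrite invr_neq0 // gt_eqF.
Qed.

Lemma Dp_upper_finite p t (c : R) : (0 < p)%R -> Dp d p t -> (0 < c)%R ->
  finite_set (dI (u_ d c%:E t)).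
Proof.
move=> p0 tD c0; have [z [hz hlt]] := Dp_lower_summable p0 tD.
have [|J [finJ JI hJ]] := esum_tail _ hlt (powR_gt0 p c0).
  by move=> *; exact: poweR_ge0.
apply: (@sub_finite_set _ _ (dI (u_ d +oo t) `|` J)); last first.
  by rewrite finite_setU; split => //; case: tD.
move=> i /= [ti ci].
have [->|ninf] := eqVneq (distA d A (dx t i)) +oo; first by left.
right; apply: contrapT => niJ.
have iI : dI (l_ d +oo t) i by split => //; rewrite ltey.
have term := esum_le_term (f := fun i => d (dx t i) (z i) `^ p)
  (P := dI (l_ d +oo t) `\` J) (conj iI niJ) (fun _ _ => poweR_ge0 _ _).
move: (le_lt_trans term hJ); apply/negP; rewrite -leNgt -poweR_EFin.
apply: ge0_lee_poweR; [exact: ltW | by rewrite lee_fin ltW |].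
by apply: le_trans ci _; apply: distA_le; exact: hz.
Qed.

Lemma Dp_vanishing p t (q : R) : (0 < p)%R -> Dp d p t -> (0 < q)%R ->
  exists2 delta : R, (0 < delta)%R & exists z,
    (forall i, dI (l_ d delta%:E t) i -> A (z i)) /\
    \esum_(i in dI (l_ d delta%:E t)) d (dx t i) (z i) `^ p < q%:E.
Proof.
move=> p0 tD q0; have [z [hz hlt]] := Dp_lower_summable p0 tD.
have [|J [finJ JI hJ]] := esum_tail _ hlt q0; first by move=> *; exact: poweR_ge0.
have fin_dist i : J i -> distA d A (dx t i) \is a fin_num.
  by move=> /JI[_]; rewrite ge0_fin_numE // distA_ge0.
have [|m m0 hm] := finite_set_pos_lb (finite_image (fine \o distA d A \o dx t) finJ).
  move=> _ [i iJ <-]; rewrite /= -lte_fin fineK ?fin_dist //.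
  by apply: distA_dx_gt0; have [] := JI i iJ.
exists m => //; exists z; split; first by move=> i /(dI_l_subset (leey _)) /hz.
apply: le_lt_trans hJ; apply: le_esum_subset; last by move=> *; exact: poweR_ge0.
move=> i li; split; first exact: dI_l_subset (leey _) _ li.
move=> iJ; have := hm _ (ex_intro2 _ _ i iJ erefl).
by case: li => _; rewrite /= -lee_fin fineK ?fin_dist // leNgt => ->.
Qed.

Lemma finite_Dp_unif_vanishing p (F : set (diagram A)) (q : R) : (0 < p)%R ->
    finite_set F -> F `<=` Dp d p -> (0 < q)%R ->
  exists2 delta : R, (0 < delta)%R & forall t, F t -> exists z,
    (forall i, dI (l_ d delta%:E t) i -> A (z i)) /\
    \esum_(i in dI (l_ d delta%:E t)) d (dx t i) (z i) `^ p < q%:E.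
Proof.
move=> p0 finF FD q0.
have /choice[delta deltaP] : forall t, exists delta : R, F t -> (0 < delta)%R /\
    exists z, (forall i, dI (l_ d delta%:E t) i -> A (z i)) /\
      \esum_(i in dI (l_ d delta%:E t)) d (dx t i) (z i) `^ p < q%:E.
  move=> t; have [Ft|] := pselect (F t); last by exists 0%R.
  by have [delta delta0 zP] := Dp_vanishing p0 (FD t Ft) q0; exists delta.
have [|m m0 hm] := finite_set_pos_lb (finite_image delta finF).
  by move=> _ [t Ft <-]; case: (deltaP t Ft).
exists m => // t Ft; have [_ [z [hz hlt]]] := deltaP t Ft.
have mt : m%:E <= (delta t)%:E by rewrite lee_fin hm //; exists t.
exists z; split; first by move=> i /(dI_l_subset mt) /hz.
apply: le_lt_trans hlt; apply: le_esum_subset; first exact: dI_l_subset.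
by move=> *; exact: poweR_ge0.
Qed.

End DpDiagrams.

Section UpperParts.
Variables (R : realType) (X : Type) (d : X -> X -> \bar R) (A : set X).
Hypothesis hd : is_metric d.
Local Open Scope ereal_scope.
Implicit Types (a t : diagram A).

Definition closely_matched (W : diagram A -> diagram A -> \bar R) :=
  forall a b (rho : R), (0 < rho)%R -> W a b < rho%:E ->
    exists K phi z w, close_matching d a b K phi z w rho%:E.

Lemma Winf_closely_matched : closely_matched (@Winf R X d A).
Proof. by move=> a b rho _; exact: Winf_close. Qed.

Lemma Wp_closely_matched (p : R) : (0 < p)%R -> closely_matched (Wp d p).
Proof.
move=> p0 a b rho rho0 /(Wp_close hd p0 rho0)[K [phi [z [w [close _]]]]].
by exists K, phi, z, w.
Qed.

(* Near a point of [A] there is no point of height [eps], and the height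
   [d(., A)] moves by less than [rho] along a paired edge. *)
Lemma close_matching_upper t a K phi z w (rho eps : R) j :
    close_matching d t a K phi z w rho%:E -> (0 < rho)%R -> (rho *+ 2 <= eps)%R ->
    dI (u_ d eps%:E a) j ->
  exists k, [/\ K k, phi k = j, dI (u_ d rho%:E t) k & d (dx t k) (dx a j) < rho%:E].
Proof.
move=> [[hK _ _ _ hw] [paired _ unpaired]] rho0 rho_eps [aj ej].
have [[k Kk kj]|nj] := pselect ((phi @` K) j).
  subst j; have dk := paired k Kk; exists k; split => //; split; first exact: hK.
  rewrite leNgt; apply/negP => lt; move: ej; apply/negP; rewrite -ltNge.
  apply: le_lt_trans (distA_le_add A hd _ (dx t k)) _.
  apply: (@lt_le_trans _ _ (rho + rho)%:E); first by rewrite EFinD lteD // (dC hd).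
  by rewrite lee_fin -mulr2n.
suff : distA d A (dx a j) < eps%:E by rewrite ltNge ej.
have dw := unpaired j aj nj.
apply: le_lt_trans (distA_le d _ (hw j aj nj)) _; rewrite (dC hd).
by apply: lt_le_trans dw _; rewrite lee_fin (le_trans _ rho_eps) // mulr2n lerDl ltW.
Qed.

Variables (W : diagram A -> diagram A -> \bar R) (S : set (diagram A)).
Hypothesis hW : closely_matched W.
Hypothesis S_upper_finite :
  forall t, S t -> forall c : R, (0 < c)%R -> finite_set (dI (u_ d c%:E t)).
Hypothesis S_tb : totally_bounded_wrt W S.

Lemma totally_bounded_unif_upper_finite : unif_upper_finite d S.
Proof.
move=> eps e0; pose rho := (eps / 2)%R.
have rho0 : (0 < rho)%R by rewrite divr_gt0.
have rho_eps : (rho *+ 2 <= eps)%R by rewrite /rho mulr2n; lra.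
have [F [finF FS cover]] := S_tb rho0.
pose N t := #|` fset_set (dI (u_ d rho%:E t))|.
have [M hM] := finite_set_nat_ub (finite_image N finF).
exists M => a Sa; have [t Ft Wta] := cover a Sa.
have [K [phi [z [w close]]]] := hW rho0 Wta.
pose B := dI (u_ d rho%:E t).
have sub : dI (u_ d eps%:E a) `<=` phi @` (K `&` B).
  move=> j uj; have [k [Kk <- Bk _]] := close_matching_upper close rho0 rho_eps uj.
  by exists k.
apply: (card_le_trans (subset_card_le sub)).
apply: (card_le_trans (card_image_le _ _)).
apply: (card_le_trans (subset_card_le (@subIsetr _ K B))).
have [n Bn] := S_upper_finite (FS t Ft) rho0.
by rewrite (card_le_eql Bn) card_le_II -(card_fset_set Bn); apply: hM; exists t.
Qed.

Lemma totally_bounded_upper_totally_bounded : upper_totally_bounded d S.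
Proof.
move=> eps e0 r r0; pose rho := (Num.min eps r / 2)%R.
have m0 : (0 < Num.min eps r)%R by rewrite lt_min e0 r0.
have rho0 : (0 < rho)%R by rewrite divr_gt0.
have rho2 : (rho *+ 2 = Num.min eps r)%R by rewrite /rho mulr2n; lra.
have [F [finF FS cover]] := S_tb rho0.
apply: (internal_net hd (rho := rho)
  (P := \bigcup_(t in F) (dx t @` dI (u_ d rho%:E t)))).
- apply: bigcup_finite => // t Ft; apply: finite_image.
  exact: S_upper_finite (FS t Ft) _ rho0.
- by rewrite rho2 ge_min lexx orbT.
- move=> _ [a Sa [j uj ->]]; have [t Ft Wta] := cover a Sa.
  have [K [phi [z [w close]]]] := hW rho0 Wta.
  have [|k [_ _ uk dk]] := close_matching_upper close rho0 _ uj.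
    by rewrite rho2 ge_min lexx.
  by exists (dx t k) => //; exists t => //; exists k.
Qed.

End UpperParts.

Section LowerPartTransport.
Variables (R : realType) (X : Type) (d : X -> X -> \bar R) (A : set X).
Hypothesis hd : is_metric d.
Local Open Scope ereal_scope.
Variables (p delta : R) (t a : diagram A) (K : set nat) (phi : nat -> nat).
Variables (z w zt : nat -> X).
Hypotheses (p_gt0 : (0 < p)%R) (match_ta : is_matching t a K phi z w).
Hypothesis zt_A : forall k, dI (l_ d (delta *+ 2)%:E t) k -> A (zt k).

Let psi := 'pinv_(fun=> 0%N) K phi.

Let lower_t k :=
  if k \in dI (l_ d (delta *+ 2)%:E t) then d (dx t k) (zt k) else 0.

(* The cost we allow for sending the point [j] of [a] to [A]: through its
   partner in [t] and the assignment [zt] of the lower part of [t], or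
   directly as in the matching. *)
Let budget j := if j \in phi @` K
  then (2 `^ p)%:E * (d (dx t (psi j)) (dx a j) `^ p + lower_t (psi j) `^ p)
  else d (w j) (dx a j) `^ p.

Let phi_inj : {in K &, injective phi}.
Proof. by case: match_ta => _ inj _ _ _ i j /set_mem Ki /set_mem Kj; exact: inj. Qed.

Let psiK k : K k -> psi (phi k) = k.
Proof. by move=> Kk; rewrite /psi (pinvKV _ phi_inj) // mem_set. Qed.

Let budget_ge0 j : 0 <= budget j.
Proof.
rewrite /budget; case: ifP => _; last exact: poweR_ge0.
by rewrite mule_ge0 ?adde_ge0 ?poweR_ge0 // lee_fin powR_ge0.
Qed.

Let lower_point_budget j : dI (l_ d delta%:E a) j ->
  exists2 y, A y & d (dx a j) y `^ p <= budget j.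
Proof.
case: match_ta => K_t _ _ _ w_A [aj a_low].
have [[k Kk kj]|nj] := pselect ((phi @` K) j); last first.
  by exists (w j); [exact: w_A | rewrite /budget memNset // (dC hd)].
subst j; rewrite /budget mem_set; last by exists k.
rewrite psiK //; have [Lk|nLk] := pselect (dI (l_ d (delta *+ 2)%:E t) k).
  exists (zt k); first exact: zt_A.
  rewrite /lower_t mem_set //.
  apply: le_trans (poweRD_le p_gt0 (d_ge0 hd _ _) (d_ge0 hd _ _)).
  apply: ge0_lee_poweR; [exact: ltW | exact: d_ge0 |].
  by rewrite (dC hd (dx t k)); exact: d_triangle.
have t_high : (delta *+ 2)%:E <= distA d A (dx t k).
  by rewrite leNgt; apply/negP => lt; apply: nLk; split => //; exact: K_t.
have [y Ay ay] := A_point_closer_than_high hd a_low t_high.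
exists y => //; rewrite /lower_t memNset // poweR0r ?gt_eqF // adde0.
apply: (@le_trans _ _ (d (dx t k) (dx a (phi k)) `^ p)).
  by apply: ge0_lee_poweR; [exact: ltW | exact: d_ge0 | exact: ltW].
by apply: lee_pemull; rewrite ?poweR_ge0 // lee_fin powR2_ge1 // ltW.
Qed.

Let esum_lower_t : \esum_(k in K) lower_t k `^ p <=
  \esum_(k in dI (l_ d (delta *+ 2)%:E t)) d (dx t k) (zt k) `^ p.
Proof.
apply: le_trans (le_esum_subset (subsetT K) (fun _ _ => poweR_ge0 _ _)) _.
rewrite [leRHS]esum_mkcond; apply: le_esum => k _.
by rewrite /lower_t; case: ifP => // _; rewrite poweR0r ?gt_eqF.
Qed.

Let esum_budget : \esum_(j in dI a) budget j <= (2 `^ p)%:E *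
  (psum_paired d p t a K phi + psum_unpaired_r d p a K phi w
   + \esum_(k in dI (l_ d (delta *+ 2)%:E t)) d (dx t k) (zt k) `^ p).
Proof.
case: match_ta => _ _ phiK_a _ _.
rewrite (esumID (phi @` K) (dI a)) ?(setIidr phiK_a) -?setDE; last first.
  by move=> j _; exact: budget_ge0.
have -> : \esum_(j in dI a `\` phi @` K) budget j = psum_unpaired_r d p a K phi w.
  by apply: eq_esum => j [_ nj]; rewrite /budget memNset.
rewrite (@reindex_esum R _ _ K (phi @` K) phi _ (inj_bij phi_inj)).
rewrite (eq_esum (b := fun k => (2 `^ p)%:E *
  (d (dx t k) (dx a (phi k)) `^ p + lower_t k `^ p))); last first.
  by move=> k Kk; rewrite /budget mem_set ?psiK //; exists k.
have two_p0 : (0 <= 2 `^ p)%R by rewrite powR_ge0.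
apply: (@le_trans _ _ ((2 `^ p)%:E * (psum_paired d p t a K phi
    + \esum_(k in K) lower_t k `^ p) + (2 `^ p)%:E * psum_unpaired_r d p a K phi w)).
  apply: leeD.
    apply: le_trans (esumZl_le K two_p0 _) _.
      by move=> k; rewrite adde_ge0 ?poweR_ge0.
    by rewrite esumD => [|k _|k _] //; exact: poweR_ge0.
  by apply: lee_pemull; [exact: psum_unpaired_r_ge0 | rewrite lee_fin powR2_ge1 // ltW].
rewrite -ge0_muleDr ?psum_unpaired_r_ge0 //; last first.
  by rewrite adde_ge0 ?psum_paired_ge0 // esum_ge0 // => *; exact: poweR_ge0.
apply: lee_wpmul2l; first by rewrite lee_fin.
by rewrite addeAC; apply: leeD (leeD (lexx _) esum_lower_t) (lexx _).
Qed.

Lemma lower_part_transport : exists zz,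
  (forall j, dI (l_ d delta%:E a) j -> A (zz j)) /\
  \esum_(j in dI (l_ d delta%:E a)) d (dx a j) (zz j) `^ p <= (2 `^ p)%:E *
    (psum_paired d p t a K phi + psum_unpaired_r d p a K phi w
     + \esum_(k in dI (l_ d (delta *+ 2)%:E t)) d (dx t k) (zt k) `^ p).
Proof.
have /choice[zz zzP] : forall j, exists y,
    dI (l_ d delta%:E a) j -> A y /\ d (dx a j) y `^ p <= budget j.
  move=> j; have [lj|nlj] := pselect (dI (l_ d delta%:E a) j); last by exists (dx a j).
  by have [y Ay hy] := lower_point_budget lj; exists y.
exists zz; split; first by move=> j /zzP[].
apply: le_trans esum_budget.
apply: le_trans (le_esum (fun j lj => (zzP j lj).2)) _.
by apply: le_esum_subset => [j [] //|j _]; exact: budget_ge0.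
Qed.

End LowerPartTransport.

Lemma totally_bounded_unif_p_vanishing (R : realType) (X : Type)
    (d : X -> X -> \bar R) (A : set X) (p : R) (S : set (diagram A)) :
  is_metric d -> closed_in_metric d A -> (0 < p)%R -> S `<=` Dp d p ->
  totally_bounded_wrt (Wp d p) S -> unif_p_vanishing d p S.
Proof.
move=> hd hA p0 SD S_tb eps e0.
pose q := (eps `^ p / (2 `^ p * 2))%R.
have q0 : (0 < q)%R by rewrite divr_gt0 ?mulr_gt0 ?powR_gt0.
pose rho := (q `^ p^-1)%R.
have [F [finF FS cover]] := S_tb rho (powR_gt0 _ q0).
have [delta0 delta0_gt0 van] :=
  finite_Dp_unif_vanishing hd hA p0 finF (subset_trans FS SD) q0.
exists (delta0 / 2)%R; first by rewrite divr_gt0.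
move=> a Sa; have [t Ft Wta] := cover a Sa.
have [K [phi [z [w [[match_ta _] sum_lt]]]]] := Wp_close hd p0 (powR_gt0 _ q0) Wta.
have [zt [zt_A zt_lt]] := van t Ft.
have half2 : ((delta0 / 2) *+ 2 = delta0)%R by rewrite mulr2n; lra.
rewrite -half2 in zt_A zt_lt.
have [zz [zz_A zz_le]] := lower_part_transport hd p0 match_ta zt_A.
apply: le_lt_trans (Wp_zero_le d p a zz_A) _.
rewrite poweRV_lt ?esum_ge0 // => [|*]; last exact: poweR_ge0.
apply: le_lt_trans zz_le _.
have -> : (eps `^ p = 2 `^ p * (q + q))%R.
  by rewrite /q; field; rewrite gt_eqF ?powR_gt0.
rewrite EFinM lte_pmul2l ?lte_fin ?powR_gt0 // (EFinD q q); apply: lteD => //.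
move: sum_lt; rewrite powRVK ?(ltW q0) //; apply: le_lt_trans.
by rewrite addeAC leeDl ?psum_unpaired_l_ge0.
Qed.

Section UpperNet.
Variables (R : realType) (X : Type) (d : X -> X -> \bar R) (A : set X).
Hypothesis hd : is_metric d.
Local Open Scope ereal_scope.
Variables (S : set (diagram A)) (delta eta : R) (M : nat).
Hypotheses (eta_gt0 : (0 < eta)%R)
  (S_card : forall a, S a -> (dI (u_ d delta%:E a) #<= `I_M)%card)
  (S_tb : totally_bounded_wrt d
     [set x | exists2 a, S a & exists2 i, dI (u_ d delta%:E a) i & x = dx a i]).

Let upper (a : diagram A) := dI (u_ d delta%:E a).
Let upper_seq (a : diagram A) : seq nat := fset_set (upper a).

Let upper_seqP a i : S a -> reflect (upper a i) (i \in upper_seq a).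
Proof.
move=> Sa; rewrite in_fset_set; first by apply: (iffP idP) => [/set_mem|/mem_set].
by apply/finite_set_leP; exists M; exact: S_card.
Qed.

(* A diagram of [S] is coded by the sequence of centres of [eta]-balls
   containing its upper points; only finitely many codes occur. *)
Lemma upper_net : exists F, [/\ finite_set F, F `<=` S &
  forall b, S b -> exists2 a, F a & exists phi,
    [/\ forall i j, upper a i -> upper a j -> phi i = phi j -> i = j,
        phi @` upper a = upper b &
        forall k, upper a k -> d (dx a k) (dx b (phi k)) < (eta *+ 2)%:E]].
Proof.
have [G [finG GT cover]] := S_tb eta_gt0; set T := [set x | _] in cover.
have /choice[code codeP] : forall x, exists c, T x -> G c /\ d c x < eta%:E.
  move=> x; have [/cover[c Gc cx]|nT] := pselect (T x); first by exists c.
  by exists x => /nT.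
have T_upper a i : S a -> upper a i -> T (dx a i) by exists a => //; exists i.
pose code_seq a := [seq code (dx a i) | i <- upper_seq a].
have [|F [finF FS repr]] := finite_image_representatives (f := code_seq) (S := S).
  apply: sub_finite_set (finite_bounded_seqs M finG) => _ [a Sa <-].
  rewrite /bounded_seqs /= size_map geq_card_fset_set ?S_card //=.
  rewrite all_map; apply/allP => i /(upper_seqP _ Sa) ai /=; apply/asboolP.
  by case: (codeP _ (T_upper a i Sa ai)).
exists F; split => // b Sb; have [a Fa code_ab] := repr b Sb; have Sa := FS a Fa.
have [map_ab inj_ab same_code] :=
  map_nth_index 0%N (sa := upper_seq a) (sb := upper_seq b)
    (fset_uniq _) (fset_uniq _) code_ab.
set phi := fun i => _ in map_ab inj_ab same_code.
exists a => //; exists phi; split.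
- by move=> i j /(upper_seqP _ Sa) ai /(upper_seqP _ Sa) aj; exact: inj_ab.
- apply/seteqP; split => [_ [i /(upper_seqP _ Sa) ai <-]|j /(upper_seqP _ Sb)].
    by apply/(upper_seqP _ Sb); rewrite -map_ab map_f.
  by rewrite -map_ab => /mapP[i /(upper_seqP _ Sa) ai ->]; exists i.
- move=> k ak; have ka : k \in upper_seq a by apply/(upper_seqP _ Sa).
  have [_ ck] := codeP _ (T_upper a k Sa ak).
  have /(upper_seqP _ Sb) bk : phi k \in upper_seq b by rewrite -map_ab map_f.
  have [_] := codeP _ (T_upper b _ Sb bk).
  rewrite /phi -(same_code k ka) mulr2n => ck'.
  by apply: (d_triangle_lt hd _ ck'); rewrite (dC hd).
Qed.

End UpperNet.

Section FiniteNets.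
Variables (R : realType) (X : Type) (d : X -> X -> \bar R) (A : set X).
Hypothesis hd : is_metric d.
Local Open Scope ereal_scope.
Variable S : set (diagram A).
Hypotheses (S_uf : unif_upper_finite d S) (S_utb : upper_totally_bounded d S).

Lemma totally_bounded_Winf : totally_bounded_wrt (@Winf R X d A) S.
Proof.
move=> eps e0; pose delta := (eps / 2)%R; pose eta := (eps / 4)%R.
have delta0 : (0 < delta)%R by rewrite divr_gt0.
have eta0 : (0 < eta)%R by rewrite divr_gt0.
have eta2 : (eta *+ 2 = delta)%R by rewrite /eta /delta mulr2n; lra.
have /choice[Z ZP] := @lower_to_A R X d A delta.
have [M hM] := S_uf delta0.
have [F [finF FS net]] := upper_net hd eta0 hM (S_utb delta0).
exists F; split => // b Sb; have [a Fa [phi [inj img close]]] := net b Sb.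
exists a => //=; apply: le_lt_trans (ereal_inf_lbound _) _.
  exists (dI (u_ d delta%:E a)), phi, (Z a), (Z b); split => //.
  by apply: upper_is_matching => // [i /ZP[]|j /ZP[]].
apply: (@le_lt_trans _ _ delta%:E); last by rewrite lte_fin /delta; lra.
apply: ge_ereal_sup => _ [[[->|[k uk <-]]|[i [ai nu] <-]]|[j [bj nj] <-]].
- by rewrite lee_fin ltW.
- by rewrite -eta2; apply/ltW/close.
- have li : dI (l_ d delta%:E a) i by rewrite -dI_l_u.
  exact/ltW/(ZP a i li).2.
- have lj : dI (l_ d delta%:E b) j by rewrite -dI_l_u -img.
  by rewrite (dC hd); exact/ltW/(ZP b j lj).2.
Qed.

Lemma unif_p_vanishing_lower (p c : R) : (0 < p)%R -> unif_p_vanishing d p S ->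
    (0 < c)%R ->
  exists2 delta : R, (0 < delta)%R & exists Z, forall a, S a ->
    (forall i, dI (l_ d delta%:E a) i -> A (Z a i)) /\
    \esum_(i in dI (l_ d delta%:E a)) d (dx a i) (Z a i) `^ p < c%:E.
Proof.
move=> p0 S_van c0; have [delta delta0 van] := S_van _ (powR_gt0 p^-1 c0).
exists delta => //.
have /choice[Z ZP] : forall a, exists z, S a ->
    (forall i, dI (l_ d delta%:E a) i -> A (z i)) /\
    \esum_(i in dI (l_ d delta%:E a)) d (dx a i) (z i) `^ p < c%:E.
  move=> a; have [Sa|nSa] := pselect (S a); last by exists (dx a).
  have [z [zA zlt]] := Wp_zero_lt p0 (van a Sa); exists z => _; split => //.
  move: zlt; rewrite poweRV_lt ?powR_gt0 ?powRVK ?(ltW c0) //.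
  by apply: esum_ge0 => *; exact: poweR_ge0.
by exists Z.
Qed.

Lemma totally_bounded_Wp (p : R) : (0 < p)%R -> unif_p_vanishing d p S ->
  totally_bounded_wrt (Wp d p) S.
Proof.
move=> p0 S_van eps e0; pose c := (eps `^ p / 3)%R.
have c0 : (0 < c)%R by rewrite divr_gt0 // powR_gt0.
have [delta delta0 [Z ZP]] := unif_p_vanishing_lower p0 S_van c0.
have [M hM] := S_uf delta0; pose C := (c / M.+1%:R)%R.
have C0 : (0 < C)%R by rewrite divr_gt0.
pose eta := (C `^ p^-1 / 2)%R.
have eta0 : (0 < eta)%R by rewrite divr_gt0 // powR_gt0.
have eta2 : ((eta *+ 2) `^ p = C)%R.
  have -> : (eta *+ 2 = C `^ p^-1)%R by rewrite /eta mulr2n; lra.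
  by rewrite powRVK // ltW.
have [F [finF FS net]] := upper_net hd eta0 hM (S_utb delta0).
exists F; split => // b Sb; have [a Fa [phi [inj img close]]] := net b Sb.
have Sa := FS a Fa; exists a => //=; apply: le_lt_trans (ereal_inf_lbound _) _.
  exists (dI (u_ d delta%:E a)), phi, (Z a), (Z b); split => //.
  by apply: upper_is_matching => //; [case: (ZP a Sa) | case: (ZP b Sb)].
rewrite pcostE poweRV_lt ?adde_ge0 ?psum_paired_ge0 ?psum_unpaired_l_ge0
  ?psum_unpaired_r_ge0 //.
have -> : (eps `^ p = c + c + c)%R by rewrite /c; lra.
rewrite !EFinD; apply: lteD; first apply: lteD.
- apply: le_lt_trans (esum_le_card (hM a Sa) (ltW C0) _) _.
    move=> k uk; rewrite poweR_ge0 -eta2 -poweR_EFin.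
    by rewrite ge0_lee_poweR ?d_ge0 ?(ltW p0) ?(ltW (close k uk)).
  by rewrite lte_fin /C mulrA ltr_pdivrMr ?ltr0n // mulrC ltr_pM2l // ltr_nat.
- by rewrite /psum_unpaired_l dI_l_u; exact: (ZP a Sa).2.
- rewrite /psum_unpaired_r img dI_l_u.
  by under eq_esum do rewrite (dC hd); exact: (ZP b Sb).2.
Qed.

End FiniteNets.

Theorem theorem7p29 (R : realType) (X : Type) (d : X -> X -> \bar R)
    (A : set X) (hd : is_metric d) (hA : closed_in_metric d A) :
  (forall S : set (diagram A), S `<=` Dinf d (A:=A) ->
     (totally_bounded_wrt (@Winf R X d A) S <->
      unif_upper_finite d S /\ upper_totally_bounded d S)) /\
  (forall p : R, 1 <= p -> forall S : set (diagram A), S `<=` Dp d (A:=A) p ->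
     (totally_bounded_wrt (Wp d p) S <->
      [/\ unif_upper_finite d S, upper_totally_bounded d S &
          unif_p_vanishing d p S])).
Proof.
split=> [S SD | p p1 S SD].
  split=> [S_tb | [S_uf S_utb]]; last exact: (totally_bounded_Winf hd S_uf S_utb).
  have S_fin t : S t -> forall c, 0 < c -> finite_set (dI (u_ d c%:E t)).
    by move=> St c; exact: SD.
  have Winf_close := @Winf_closely_matched R X d A.
  split; [exact: (totally_bounded_unif_upper_finite hd Winf_close S_fin S_tb) |
          exact: (totally_bounded_upper_totally_bounded hd Winf_close S_fin S_tb)].
have p0 : 0 < p := lt_le_trans ltr01 p1.
split=> [S_tb | [S_uf S_utb S_van]].
  have S_fin t : S t -> forall c, 0 < c -> finite_set (dI (u_ d c%:E t)).
    by move=> St c; exact: Dp_upper_finite p0 (SD t St).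
  have Wp_close := Wp_closely_matched (A := A) hd p0.
  split; [exact: (totally_bounded_unif_upper_finite hd Wp_close S_fin S_tb) |
          exact: (totally_bounded_upper_totally_bounded hd Wp_close S_fin S_tb) |
          exact: (totally_bounded_unif_p_vanishing hd hA p0 SD S_tb)].
exact: (totally_bounded_Wp hd S_uf S_utb p0 S_van).
Qed.
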